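(* Let $\overline G$ be a finite graph embedded in an annulus $A$ with annular connectivity $\kappa(\overline G)=1$, and let $G$ be its lift to the universal cover of $A$. Let $v$ be a vertex forming an annular cut set, and let $H$ be the finite graph obtained by splitting $\overline G$ at $v$ into two vertices $v',v''$, so that $G$ is the infinite join $\cdots * H_\nu * H_{\nu+1}*\cdots$ of copies $(H_\nu,v'_\nu,v''_\nu)$ of $(H,v',v'')$, with $H_\nu$ joined to $H_{\nu+1}$ by identifying $v'_\nu$ with $v''_{\nu+1}$. Then, over $\mathbb F=\mathbb Q$, the Laplacian polynomial satisfies $\Delta_0(x)=\tau(H)(x-1)^2$ (up to units of $\mathbb Q[x^{\pm1}]$), where $\tau(H)$ is the number of spanning trees of $H$.
   Context: $\mathbb Z=\langle x\rangle$ acts on $G$ by deck transformations with quotient $\overline G$ with vertices $v_1,\dots,v_n$; choose lifts $v_{i,0}$ and set $v_{i,\nu}=x^\nu v_{i,0}$. The Laplacian matrix is $L(x)=D-A(x)$ over $\mathbb Q[x^{\pm1}]$, $D$ the diagonal matrix of degrees (loops counted twice), $A(x)_{ij}$ the sum of $x^\nu$ over edges of $G$ from $v_{i,0}$ to $v_{j,\nu}$; $\Delta_0=\det L(x)$, defined up to units. An annular cut set of $\overline G$ is a set of vertices whose removal (with incident edges) leaves a graph contained in a disk in $A$; $\kappa(\overline G)$ is the minimal cardinality of such a set. *)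

From HB Require Import structures.
From mathcomp Require Import all_boot all_order all_algebra.
Set Implicit Arguments. Unset Strict Implicit. Unset Printing Implicit Defensive.
Import Order.TTheory GRing.Theory Num.Theory.
Local Open Scope ring_scope.

(* The finite graph H: a finite multigraph (loops and parallel edges allowed) *)
(* Two distinguished distinct vertices v1 = v' and v2 = v''.                  *)

Definition dart (V E : Type) (ends : E -> V * V) (e : E) (b : bool) : V * V :=
  if b then ends e else ((ends e).2, (ends e).1).

Definition adjT (V E : finType) (ends : E -> V * V) (T : {set E}) : rel V :=
  fun u w => [exists e in T, (ends e == (u, w)) || (ends e == (w, u))].

(* T is (the edge set of) a spanning tree of H: the subgraph (V, T) is
   connected, and minimally so (every edge of T is a bridge; in particular
   T contains no loops and no cycles). *)
Definition spanning_tree (V E : finType) (ends : E -> V * V) (T : {set E}) :=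
  [forall u : V, forall w : V, connect (adjT ends T) u w] &&
  [forall e in T, ~~ connect (adjT ends (T :\ e)) (ends e).1 (ends e).2].

Definition tau (V E : finType) (ends : E -> V * V) : nat :=
  #|[set T : {set E} | spanning_tree ends T]|.

(* Vertices of G are pairs (u, nu) with u : V, u != v2, nu : int; the copy of *)
(* vertex u of H in H_nu is join_vtx v1 v2 nu u, where v''_nu is identified   *)
(* with v'_{nu-1} (equivalently v'_nu = v''_{nu+1}).  Edges of G are pairs    *)
(* (e, nu), e : E, joining the images of the endpoints of e in H_nu.  The     *)
(* deck transformation x acts by (u, nu) |-> (u, nu + 1), (e,nu) |-> (e,nu+1).*)
(* The quotient graph Gbar has vertices {u : V | u != v2} (v = image of v'),  *)
(* and we choose the lifts v_{i,0} := (i, 0).                                 *)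
Definition join_vtx (V : eqType) (v1 v2 : V) (nu : int) (u : V) : V * int :=
  if u == v2 then (v1, nu - 1) else (u, nu).

Definition qvert (V : finType) (v2 : V) := {u : V | u != v2}.

(* Laurent polynomials Q[x^{+-1}] are viewed inside the field Q(x). *)
Definition Fx := {fraction {poly rat}}.
Definition xF : Fx := tofrac ('X : {poly rat}).

(* A(x)_{ij} = sum of x^nu over the darts (oriented edges) of G from v_{i,0}
   to v_{j,nu}.  Every such dart is the translate by x^{-m} of a unique dart
   (e, 0, b) of the copy H_0 going from (i, m) to (j, m + nu); hence the sum
   below (a loop of G at v_{i,0} contributes twice, once per orientation). *)
Definition lapA (V E : finType) (ends : E -> V * V) (v1 v2 : V)
    (i j : qvert v2) : Fx :=
  \sum_(e : E) \sum_(b : bool)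
    let a := join_vtx v1 v2 0 (dart ends e b).1 in
    let c := join_vtx v1 v2 0 (dart ends e b).2 in
    if (a.1 == val i) && (c.1 == val j) then xF ^ (c.2 - a.2) else 0.

(* degree of v_{i,0} in G (loops counted twice): number of darts of G with
   tail v_{i,0}, i.e. (by translation) darts of H_0 with tail in the orbit of
   v_{i,0}. *)
Definition lapD (V E : finType) (ends : E -> V * V) (v1 v2 : V)
    (i : qvert v2) : nat :=
  \sum_(e : E) \sum_(b : bool)
    ((join_vtx v1 v2 0 (dart ends e b).1).1 == val i).

Definition lapL (V E : finType) (ends : E -> V * V) (v1 v2 : V) :
    'M[Fx]_#|{: qvert v2}| :=
  \matrix_(i, j)
    ((if i == j then (lapD ends v1 (enum_val i))%:R else 0)
     - lapA ends v1 (enum_val i) (enum_val j)).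

Definition Delta0 (V E : finType) (ends : E -> V * V) (v1 v2 : V) : Fx :=
  \det (lapL ends v1 v2).

From HB Require Import structures.
From mathcomp Require Import all_boot all_order all_algebra fingroup perm.
From mathcomp Require Import ring.
Set Implicit Arguments. Unset Strict Implicit. Unset Printing Implicit Defensive.
Import Order.TTheory GRing.Theory Num.Theory.
Local Open Scope ring_scope.

(* Gluing [v''] to [v'] one level down, every dart of the copy [H_0] reads
   off an entry of [L(x)]; this gives [L(x) = P * L' * Q], where [L'] is the
   Laplacian of [H] with the row and column of [v''] deleted and [P], [Q] are
   identity matrices perturbed in the row, resp. column, of [v'], with
   determinants [1 - x] and [1 - x^-1].  By the matrix-tree theorem
   [det L' = tau(H)], hence [Delta_0 = (1 - x) (1 - x^-1) tau(H)
   = - x^-1 tau(H) (x - 1)^2].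
   The matrix-tree theorem is obtained by expanding every row of [L'] over the
   darts leaving that vertex: a choice [phi] of one outgoing dart per vertex
   other than [v''] contributes [det (1 - F_phi)] for the functional graph
   [F_phi] it defines, which is [1] if every vertex flows to [v''] and [0]
   otherwise, and such choices are exactly the spanning trees of [H] oriented
   towards [v'']. *)

Section Darts.
Variables (V E : finType) (ends : E -> V * V).
Implicit Types (T : {set E}) (c d : E * bool).

Definition dtail d := (dart ends d.1 d.2).1.
Definition dhead d := (dart ends d.1 d.2).2.

Lemma adjTP T a b :
  reflect (exists d, [/\ d.1 \in T, dtail d = a & dhead d = b]) (adjT ends T a b).
Proof.
apply: (iffP existsP) => [[e /andP[eT /orP[/eqP h|/eqP h]]]|[[e b'] [/= eT]]].
- by exists (e, true); rewrite /dtail /dhead /dart /= h.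
- by exists (e, false); rewrite /dtail /dhead /dart /= h.
rewrite /dtail /dhead /dart /=; case: b' => <- <-; exists e;
  by rewrite eT /= -surjective_pairing eqxx ?orbT.
Qed.

Lemma adjT_dart T d : d.1 \in T -> adjT ends T (dtail d) (dhead d).
Proof. by move=> dT; apply/adjTP; exists d. Qed.

Lemma adjT_sym T : symmetric (adjT ends T).
Proof.
move=> a b; apply/adjTP/adjTP => -[[e b'] [eT <- <-]];
  by exists (e, ~~ b'); split=> //; rewrite /dtail /dhead /dart /=; case: (b').
Qed.

Lemma connect_adjT_sym T : connect_sym (adjT ends T).
Proof. exact/sym_connect_sym/adjT_sym. Qed.

Lemma connect_dart T x d :
  d.1 \in T -> connect (adjT ends T) x (dtail d) -> connect (adjT ends T) x (dhead d).
Proof. by move=> dT /connect_trans; apply; apply/connect1/adjT_dart. Qed.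

Lemma connect_closed_darts T (S : pred V) :
  (forall d, d.1 \in T -> dtail d \in S -> dhead d \in S) ->
  forall x y, connect (adjT ends T) x y -> x \in S -> y \in S.
Proof.
move=> closedS x y /connectP[p Tp ->]; elim: p x Tp => //= z p IHp x.
by case/andP=> /adjTP[d [dT <- <-]] Tp Sx; apply: IHp Tp (closedS d dT Sx).
Qed.

Lemma opposite_darts c d :
  c.1 = d.1 -> c != d -> dtail c = dhead d /\ dhead c = dtail d.
Proof.
case: c d => [e b1] [e' b2] /= <-; rewrite /dtail /dhead /dart /=.
by case: b1; case: b2; rewrite ?eqxx.
Qed.

Lemma same_edge_darts c d : c.1 = d.1 ->
  (dtail c = dtail d /\ dhead c = dhead d) \/ (dtail c = dhead d /\ dhead c = dtail d).
Proof. by move=> cd; have [->|] := eqVneq c d; [left|right; apply: opposite_darts]. Qed.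

Lemma connect_ends_dart T d :
  connect (adjT ends T) (dtail d) (dhead d) = connect (adjT ends T) (ends d.1).1 (ends d.1).2.
Proof. by rewrite /dtail /dhead /dart; case: d.2; rewrite // connect_adjT_sym. Qed.

Definition connected T := forall u w, connect (adjT ends T) u w.

Lemma sum_darts_antisym (R : zmodType) (f : V -> R) :
  \sum_(d : E * bool) (f (dtail d) - f (dhead d)) = 0.
Proof.
rewrite -(pair_bigA _ (fun e b => f (dtail (e, b)) - f (dhead (e, b)))) big1 // => e _.
by rewrite big_bool /dtail /dhead /= addrC addrA subrK subrr.
Qed.

Lemma connect_delete_edge T d : connected T ->
  forall u, connect (adjT ends (T :\ d.1)) (dtail d) u ||
            connect (adjT ends (T :\ d.1)) (dhead d) u.
Proof.
move=> connT u; pose C := connect (adjT ends (T :\ d.1)).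
suff: u \in [predU C (dtail d) & C (dhead d)] by rewrite !inE.
apply: (connect_closed_darts _ (connT (dtail d) u)); last by rewrite !inE /C connect0.
move=> c cT; rewrite !inE /C; have [cd|cd] := eqVneq c.1 d.1.
  by case: (same_edge_darts cd) => -[_ ->]; rewrite connect0 ?orbT.
by case/orP=> dc; apply/orP; [left|right]; apply: connect_dart dc; rewrite !inE cd.
Qed.

Lemma spanning_tree_connected T : spanning_tree ends T -> connected T.
Proof. by case/andP=> /forallP connT _ u; apply/forallP. Qed.

Lemma spanning_tree_bridge T e : spanning_tree ends T -> e \in T ->
  ~~ connect (adjT ends (T :\ e)) (ends e).1 (ends e).2.
Proof. by case/andP=> _ /forall_inP; apply. Qed.

Variable r : V.

(* [d] is the first dart of the path from [v] to the root [r] in [T]. *)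
Definition rootward T v d :=
  [&& d.1 \in T, dtail d == v & ~~ connect (adjT ends (T :\ d.1)) v r].

Lemma rootward_uniq T v d d' : connected T ->
  rootward T v d -> rootward T v d' -> d = d'.
Proof.
move=> connT rd rd'; apply/eqP/negPn/negP => dd'.
pose C (b : E * bool) := connect (adjT ends (T :\ b.1)) v.
(* The component of [v] in [T :\ a.1] is left only through the edge of [a],
   which leads into the component of [v] in [T :\ b.1]. *)
have leave a b : rootward T v a -> dtail b = v -> a != b ->
    forall c, c.1 = a.1 -> c.1 \in T -> C b (dhead c) || C a (dhead c).
  case/and3P=> aT /eqP av _ bv ab c ca cT; have [->|ca'] := eqVneq c a.
    have [ab1|ab1] := eqVneq a.1 b.1.
      by case: (opposite_darts ab1 ab) => _ ->; rewrite /C bv connect0.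
    by rewrite /C -av (connect_dart _ (connect0 _ _)) // !inE ab1 aT.
  by case: (opposite_darts ca ca') => _ ->; rewrite /C av connect0 ?orbT.
case/and3P: (rd) => _ /eqP dv ndr; case/and3P: (rd') => _ /eqP dv' ndr'.
suff: r \in [predU C d & C d'] by rewrite !inE /C (negPf ndr) (negPf ndr').
apply: (connect_closed_darts _ (connT v r)); last by rewrite !inE /C connect0.
move=> c cT; rewrite !inE => /orP[cd|cd'].
  have [cd1|cd1] := eqVneq c.1 d.1.
    by rewrite orbC; apply: (leave _ _ rd dv' dd' c cd1 cT).
  by rewrite /C (connect_dart _ cd) // !inE cd1.
have [cd1|cd1] := eqVneq c.1 d'.1.
  by apply: (leave _ _ rd' dv _ c cd1 cT); rewrite eq_sym.
by rewrite /C (connect_dart _ cd') ?orbT // !inE cd1.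
Qed.

Lemma rootward_exists T v : spanning_tree ends T -> v != r -> exists d, rootward T v d.
Proof.
move=> sT vr; apply/existsP; apply: contraT => /existsPn nrw.
pose U := [pred u | (u == v) || [exists d, [&& d.1 \in T, dtail d == v &
                    connect (adjT ends (T :\ d.1)) (dhead d) u]]].
have: r \in U.
  apply: (connect_closed_darts _ (spanning_tree_connected sT v r)); last first.
    by rewrite inE eqxx.
  move=> c cT; rewrite !inE => /orP[/eqP cv|/existsP[d /and3P[dT /eqP dv dc]]].
    by apply/orP; right; apply/existsP; exists c; rewrite cT cv eqxx connect0.
  have [cd|cd] := eqVneq c.1 d.1.
    case: (same_edge_darts cd) => -[_ ->]; last by rewrite dv eqxx.
    by apply/orP; right; apply/existsP; exists d; rewrite dT dv eqxx connect0.
  apply/orP; right; apply/existsP; exists d; rewrite dT dv eqxx /=.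
  by apply: connect_dart dc; rewrite !inE cd.
rewrite inE eq_sym (negPf vr) /= => /existsP[d /and3P[dT /eqP dv dr]].
move: (nrw d); rewrite /rootward dT dv eqxx /= negbK => vdr.
have := spanning_tree_bridge sT dT; rewrite -connect_ends_dart dv.
by rewrite (connect_trans vdr) // connect_adjT_sym.
Qed.

End Darts.

Section FunctionalGraph.
Variables (T : finType) (f : T -> T).

Lemma fconnect_shift u v : u != v -> fconnect f (f u) v = fconnect f u v.
Proof.
move=> uv; apply/idP/idP; first exact: connect_trans (fconnect1 f u).
move/iter_findex; case: (findex f u v) => [/= uv'|n]; first by rewrite uv' eqxx in uv.
by rewrite iterSr => <-; apply: fconnect_iter.
Qed.

Variable r : T.
Hypothesis fr : f r = r.

Lemma fconnect_fixed u : fconnect f r u -> u = r.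
Proof. by move/iter_findex <-; rewrite iter_fix. Qed.

Lemma fconnect_no_return u : fconnect f u r -> u != r -> ~~ fconnect f (f u) u.
Proof.
move=> ur u_r; apply/negP => fuu.
have iter_u n : fconnect f (iter n f u) u.
  elim: n => [|n IHn] /=; first exact: connect0.
  by have [->|] := eqVneq (iter n f u) u; last by move/fconnect_shift->.
move: (iter_u (findex f u r)); rewrite iter_findex // => /fconnect_fixed ru.
by rewrite ru eqxx in u_r.
Qed.

End FunctionalGraph.

Section ParentMap.
Variables (V E : finType) (ends : E -> V * V) (r : V) (p : V -> E * bool).
Local Notation adj := (adjT ends).

Definition parent v := if v == r then r else dhead ends (p v).
Definition parent_edges := [set (p v).1 | v in [set v | v != r]].
Definition parent_valid := forall v, v != r -> dtail ends (p v) = v.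
Definition parent_acyclic := forall v, fconnect parent v r.

Lemma parent_root : parent r = r.
Proof. by rewrite /parent eqxx. Qed.

Lemma parent_head v : v != r -> parent v = dhead ends (p v).
Proof. by rewrite /parent => /negPf->. Qed.

Lemma parent_edgeP v : v != r -> (p v).1 \in parent_edges.
Proof. by move=> vr; apply/imsetP; exists v; rewrite ?inE. Qed.

Section ValidParent.
Hypothesis pvalid : parent_valid.

Lemma connect_descendants v x y : v != r ->
  connect (adj (parent_edges :\ (p v).1)) x y -> fconnect parent x v -> fconnect parent y v.
Proof.
move=> vr xy; apply: (connect_closed_darts (S := [pred u | fconnect parent u v]) _ xy).
move=> c; rewrite !inE => /andP[cv /imsetP[u]]; rewrite inE => ur cu.
have uv : u != v by apply: contraNneq cv => <-; rewrite cu.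
by case: (same_edge_darts ends cu) => -[-> ->];
  rewrite pvalid // -parent_head // fconnect_shift.
Qed.

Lemma parent_rootward v : v != r -> rootward ends r parent_edges v (p v).
Proof.
move=> vr; rewrite /rootward parent_edgeP // pvalid // eqxx /=.
apply/negP => /(connect_descendants vr) /(_ (connect0 _ _)).
by move/(fconnect_fixed parent_root) => rv; rewrite rv eqxx in vr.
Qed.

Lemma parent_spanning_tree : parent_acyclic -> spanning_tree ends parent_edges.
Proof.
move=> pacyc; have to_parent v : connect (adj parent_edges) v (parent v).
  have [->|vr] := eqVneq v r; first by rewrite parent_root connect0.
  rewrite parent_head // -{1}(pvalid vr); exact/connect1/adjT_dart/parent_edgeP.
have to_root v : connect (adj parent_edges) v r.
  rewrite -(iter_findex (pacyc v)); elim: (findex _ _ _) => [|n IHn] /=.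
    exact: connect0.
  exact: connect_trans IHn (to_parent _).
apply/andP; split.
  apply/forallP=> u; apply/forallP=> w.
  by apply: connect_trans (to_root u) _; rewrite connect_adjT_sym to_root.
apply/forall_inP=> e /imsetP[v]; rewrite inE => vr ->.
rewrite -connect_ends_dart pvalid //; apply/negP.
move=> /(connect_descendants vr) /(_ (connect0 _ _)).
by rewrite -parent_head // (negPf (fconnect_no_return parent_root (pacyc v) vr)).
Qed.

End ValidParent.

Section TreeParent.
Variable T : {set E}.
Hypotheses (sT : spanning_tree ends T)
  (prootward : forall v, v != r -> rootward ends r T v (p v)).

Lemma rootward_parent_valid : parent_valid.
Proof. by move=> v /prootward /and3P[_ /eqP]. Qed.

Lemma rootward_parent_acyclic : parent_acyclic.
Proof.
move=> u0; apply: contraT => u0r.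
have xr x : ~~ fconnect parent x r -> x != r.
  by apply: contraNneq => ->; apply: connect0.
pose Z := [pred u | [exists x, ~~ fconnect parent x r &&
                               connect (adj (T :\ (p x).1)) x u]].
suff /existsP[x /andP[xr' xrT]] : r \in Z.
  by case/and3P: (prootward (xr x xr')) => _ _; rewrite xrT.
apply: (connect_closed_darts _ (spanning_tree_connected sT u0 r)); last first.
  by rewrite inE; apply/existsP; exists u0; rewrite u0r connect0.
move=> c cT; rewrite !inE => /existsP[x /andP[nx cx]].
have [cx1|cx1] := eqVneq c.1 (p x).1; last first.
  by apply/existsP; exists x; rewrite nx (connect_dart _ cx) // !inE cx1.
apply/existsP; case: (same_edge_darts ends cx1) => -[_ ->].
  exists (parent x); rewrite -parent_head ?xr // connect0 andbT.
  by rewrite fconnect_shift ?xr.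
by exists x; rewrite rootward_parent_valid ?xr // nx connect0.
Qed.

Lemma rootward_parent_edges : parent_edges = T.
Proof.
apply/setP => e; apply/imsetP/idP => [[v]|eT].
  by rewrite inE => /prootward /and3P[? _ _] ->.
have connT := spanning_tree_connected sT; have bridge := spanning_tree_bridge sT eT.
have rootward_end d : d.1 = e -> ~~ connect (adj (T :\ e)) (dtail ends d) r ->
    exists2 v, v \in [set v | v != r] & e = (p v).1.
  move=> de dr; have dr' : dtail ends d != r by apply: contraNneq dr => ->.
  have rd : rootward ends r T (dtail ends d) d by rewrite /rootward de eT eqxx dr.
  by exists (dtail ends d); rewrite ?inE // -de (rootward_uniq connT (prootward dr') rd).
have := @connect_delete_edge _ _ ends T (e, true) connT r; rewrite /dtail /dhead /=.
case/orP=> [ar|br]; [apply: (rootward_end (e, false))|apply: (rootward_end (e, true))] => //=.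
  by apply: contra bridge => br; rewrite (connect_trans ar) // connect_adjT_sym.
by apply: contra bridge => ar; rewrite (connect_trans ar) // connect_adjT_sym.
Qed.

End TreeParent.

End ParentMap.

Lemma det_sum_rows (R : comNzRingType) n (D : finType) (G : 'I_n -> D -> 'I_n -> R) :
  \det (\matrix_(i, j) \sum_(d : D) G i d j) =
  \sum_(phi : {ffun 'I_n -> D}) \det (\matrix_(i, j) G i (phi i) j).
Proof.
rewrite /determinant.
transitivity (\sum_(s : 'S_n) \sum_(phi : {ffun 'I_n -> D})
                 (-1) ^+ s * \prod_i G i (phi i) (s i)).
  apply: eq_bigr => s _; rewrite -mulr_sumr; congr (_ * _).
  rewrite -(bigA_distr_bigA (fun i d => G i d (s i))).
  by apply: eq_bigr => i _; rewrite mxE.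
rewrite exchange_big; apply: eq_bigr => phi _; apply: eq_bigr => s _.
by congr (_ * _); apply: eq_bigr => i _; rewrite mxE.
Qed.

Lemma det_scale_rows (R : comNzRingType) n (c : 'I_n -> R) (B : 'I_n -> 'I_n -> R) :
  \det (\matrix_(i, j) (c i * B i j)) = (\prod_i c i) * \det (\matrix_(i, j) B i j).
Proof.
have -> : \matrix_(i, j) (c i * B i j) = diag_mx (\row_i c i) *m \matrix_(i, j) B i j.
  by apply/matrixP => i j; rewrite mul_diag_mx !mxE.
by rewrite det_mulmx det_diag; congr (_ * _); apply: eq_bigr => i _; rewrite mxE.
Qed.

Lemma det_1_sub_row (R : comNzRingType) n (i0 : 'I_n) (c : R) :
  \det (\matrix_(i, j) ((i == j)%:R - c * (i == i0)%:R)) = 1 - c.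
Proof.
rewrite (expand_det_col _ i0) (bigD1 i0) //= big1 ?addr0; last first.
  by move=> k /negPf ki0; rewrite !mxE ki0 !mulr0 subr0 mul0r.
rewrite !mxE eqxx mulr1 /cofactor addnn -signr_odd odd_double expr0 mul1r.
suff -> : row' i0 (col' i0 (\matrix_(i, j) ((i == j)%:R - c * (i == i0)%:R))) = 1%:M.
  by rewrite det1 mulr1.
apply/matrixP => a b; rewrite !mxE (inj_eq (lift_inj (h := i0))).
by rewrite [lift i0 a == i0]eq_sym (negPf (neq_lift _ _)) mulr0 subr0.
Qed.

Lemma sum_natr_eq (R : nzSemiRingType) (I : finType) (c : I) (F : I -> R) :
  \sum_k (k == c)%:R * F k = F c.
Proof. by rewrite (bigD1 c) //= eqxx mul1r big1 ?addr0 // => k /negPf->; rewrite mul0r. Qed.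

Lemma prod_natr_bool (R : comNzSemiRingType) (I : finType) (b : I -> bool) :
  \prod_i (b i)%:R = ([forall i, b i] : bool)%:R :> R.
Proof.
have [/forallP bT|/forallPn[i nbi]] := boolP [forall i, b i].
  by rewrite big1 // => i _; rewrite bT.
by rewrite (bigD1 i) //= (negPf nbi) mul0r.
Qed.

Section QuotientIndex.
Variables (V : finType) (r : V).
Local Notation m := #|{: qvert r}|.

Definition qval (i : 'I_m) : V := val (enum_val i : qvert r).

Lemma qval_neq i : qval i != r.
Proof. exact: valP (enum_val i). Qed.

Lemma qval_inj : injective qval.
Proof. by move=> i j /val_inj /(congr1 enum_rank); rewrite !enum_valK. Qed.

Lemma qval_rank (q : qvert r) : qval (enum_rank q) = val q.
Proof. by rewrite /qval enum_rankK. Qed.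

Lemma sum_qval (R : nzSemiRingType) u (c : V -> R) :
  \sum_j (u == qval j)%:R * c (qval j) = (u != r)%:R * c u.
Proof.
have [->|ur] := eqVneq u r.
  by rewrite mul0r big1 // => j _; rewrite eq_sym (negPf (qval_neq j)) mul0r.
rewrite (bigD1 (enum_rank (Sub u ur : qvert r))) //= qval_rank eqxx !mul1r.
rewrite big1 ?addr0 // => j jr; case: eqP => [uj|]; last by rewrite mul0r.
by case/eqP: jr; apply: qval_inj; rewrite qval_rank /= uj.
Qed.

Definition funmx (R : nzRingType) (g : V -> V) : 'M[R]_m :=
  \matrix_(i, j) (g (qval i) == qval j)%:R.

Variables (R : fieldType) (g : V -> V).

Lemma det_1_sub_funmx_acyclic :
  (forall v, fconnect g v r) -> \det (1%:M - funmx R g) = 1.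
Proof.
move=> gacyc; set M := 1%:M - _.
have gi i : g (qval i) != qval i.
  apply/eqP => gii; case/eqP: (qval_neq i).
  by rewrite -(iter_findex (gacyc (qval i))) iter_fix.
(* On the support of a permutation [s] with nonzero diagonal product, [g]
   follows [s]; then iterating [g] from a moved point never reaches [r]. *)
have zero_entry (s : 'S_m) : s != 1%g -> exists i, M i (s i) == 0.
  move=> s1; apply/existsP; apply: contraT => /existsPn Mnz.
  have [i1 si1] : exists i, s i != i.
    apply/existsP; apply: contraNT s1 => /existsPn s_id.
    by apply/eqP/permP => i; rewrite perm1; apply/eqP/negPn.
  have follow i : s i != i -> g (qval i) = qval (s i).
    rewrite eq_sym => /negPf i_si; apply/eqP; move: (Mnz i).
    by rewrite !mxE i_si sub0r oppr_eq0; case: (g _ == _); rewrite ?eqxx.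
  have orbit k : s (iter k s i1) != iter k s i1 /\
                 qval (iter k s i1) = iter k g (qval i1).
    elim: k => [|k [sk ek]] //=; split; last by rewrite -follow // ek.
    by apply: contra sk => /eqP /perm_inj ->.
  have := (orbit (findex g (qval i1) r)).2; rewrite iter_findex //.
  by move/eqP; rewrite (negPf (qval_neq _)).
rewrite /determinant (bigD1 1%g) //= [X in _ + X]big1 ?addr0; last first.
  by move=> s /zero_entry[i /eqP Mi]; rewrite (bigD1 i) //= Mi mul0r mulr0.
rewrite odd_perm1 expr0 mul1r big1 // => i _.
by rewrite perm1 !mxE eqxx (negPf (gi i)) subr0.
Qed.

Lemma det_1_sub_funmx_cyclic u :
  g r = r -> ~~ fconnect g u r -> \det (1%:M - funmx R g) = 0.
Proof.
move=> gr ur; have u_r : u != r by apply: contraNneq ur => ->; apply: connect0.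
pose y v : R := (~~ fconnect g v r)%:R.
(* [y] is constant along [g] away from [r] and vanishes at [r]. *)
apply/eqP; rewrite -det_tr; apply/det0P; exists (\row_i y (qval i)).
  apply/eqP => /rowP /(_ (enum_rank (Sub u u_r : qvert r))).
  by rewrite !mxE qval_rank /y ur => /eqP; rewrite oner_eq0.
apply/rowP => j; rewrite !mxE.
under eq_bigr => i _ do rewrite !mxE mulrBr [y _ * _]mulrC [y _ * (_ == _)%:R]mulrC eq_sym.
rewrite sumrB sum_natr_eq sum_qval /y.
have [gj|gj] := eqVneq (g (qval j)) r.
  by rewrite mul0r subr0 -fconnect_shift ?qval_neq // gj connect0.
by rewrite mul1r fconnect_shift ?qval_neq // subrr.
Qed.

Lemma det_1_sub_funmx : g r = r ->
  \det (1%:M - funmx R g) = ([forall v, fconnect g v r] : bool)%:R.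
Proof.
move=> gr; have [/forallP|/forallPn[u]] := boolP [forall v, fconnect g v r].
  exact: det_1_sub_funmx_acyclic.
exact: det_1_sub_funmx_cyclic.
Qed.

End QuotientIndex.

Section MatrixTree.
Variables (V E : finType) (ends : E -> V * V) (v1 v2 : V) (hv : v1 != v2).
Local Notation m := #|{: qvert v2}|.
Local Notation qval := (@qval V v2).

Definition qrank u : 'I_m := enum_rank (insubd (exist _ v1 hv : qvert v2) u).

Lemma qrankK i : qrank (qval i) = i.
Proof. by rewrite /qrank valKd enum_valK. Qed.

Lemma qvalK u : u != v2 -> qval (qrank u) = u.
Proof. by move=> uv2; rewrite /qrank qval_rank val_insubd uv2. Qed.

Lemma eq_qval u i : u != v2 -> (u == qval i) = (i == qrank u).
Proof. by move=> uv2; apply/eqP/eqP => [->|->]; rewrite ?qrankK ?qvalK. Qed.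

Lemma sum_qrank (R : nzSemiRingType) u (F : 'I_m -> R) :
  \sum_k (u == qval k)%:R * F k = (u != v2)%:R * F (qrank u).
Proof.
rewrite -(@sum_qval _ _ _ u (fun v => F (qrank v))).
by apply: eq_bigr => k _; rewrite qrankK.
Qed.

Definition parent_of (phi : {ffun 'I_m -> E * bool}) v := phi (qrank v).

Definition rooted_parent_maps := [set phi : {ffun 'I_m -> E * bool} |
  [forall i, dtail ends (phi i) == qval i] &&
  [forall v, fconnect (parent ends v2 (parent_of phi)) v v2]].

Lemma parent_of_valid (phi : {ffun 'I_m -> E * bool}) :
  [forall i, dtail ends (phi i) == qval i] -> parent_valid ends v2 (parent_of phi).
Proof. by move=> /forallP phiT v vv2; rewrite /parent_of (eqP (phiT _)) qvalK. Qed.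

Lemma rooted_parent_maps_inj :
  {in rooted_parent_maps &, injective (fun phi => parent_edges v2 (parent_of phi))}.
Proof.
move=> phi psi; rewrite !inE => /andP[/parent_of_valid pv /forallP pa].
move=> /andP[/parent_of_valid qv _] e; apply/ffunP => i.
have connT := spanning_tree_connected (parent_spanning_tree pv pa).
have := parent_rootward pv (qval_neq i); have := parent_rootward qv (qval_neq i).
rewrite -e => r2 r1; move: (rootward_uniq connT r1 r2).
by rewrite /parent_of qrankK.
Qed.

Lemma rooted_parent_map_of_tree T : spanning_tree ends T ->
  exists2 phi, phi \in rooted_parent_maps & parent_edges v2 (parent_of phi) = T.
Proof.
move=> sT; pose phi := [ffun i : 'I_m => xchoose (rootward_exists sT (qval_neq i))].
have prootward v : v != v2 -> rootward ends v2 T v (parent_of phi v).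
  by move=> vv2; rewrite /parent_of ffunE -{1}(qvalK vv2); apply: xchooseP.
exists phi; last exact: rootward_parent_edges sT prootward.
rewrite inE; apply/andP; split; last exact/forallP/(rootward_parent_acyclic sT prootward).
by apply/forallP => i; case/and3P: (prootward _ (qval_neq i)); rewrite /parent_of qrankK.
Qed.

Lemma card_rooted_parent_maps : #|rooted_parent_maps| = tau ends.
Proof.
rewrite /tau -(card_in_imset rooted_parent_maps_inj); apply: eq_card => T.
rewrite inE; apply/imsetP/idP => [[phi]|/rooted_parent_map_of_tree[phi ? <-]].
  by rewrite inE => /andP[/parent_of_valid pv /forallP pa] ->; apply: parent_spanning_tree.
by exists phi.
Qed.

(* The Laplacian of [H] with the row and column of [v2] deleted. *)
Definition redlap (R : fieldType) : 'M[R]_m :=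
  \matrix_(i, j) \sum_(d : E * bool)
     ((dtail ends d == qval i)%:R * ((i == j)%:R - (dhead ends d == qval j)%:R)).

Lemma det_redlap (R : fieldType) : \det (redlap R) = (tau ends)%:R.
Proof.
rewrite det_sum_rows -card_rooted_parent_maps -sum1_card natr_sum [RHS]big_mkcond.
apply: eq_bigr => phi _; rewrite det_scale_rows prod_natr_bool inE.
have [phiT|] := boolP [forall i, dtail ends (phi i) == qval i]; last by rewrite mul0r.
suff -> : \matrix_(i, j) ((i == j)%:R - (dhead ends (phi i) == qval j)%:R) =
          1%:M - funmx v2 R (parent ends v2 (parent_of phi)).
  by rewrite mul1r det_1_sub_funmx ?parent_root //=; case: [forall v, _].
apply/matrixP => i j; rewrite !mxE parent_head ?qval_neq //.
by rewrite /parent_of qrankK.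
Qed.


Lemma mul_redlap (R : fieldType) (P Q : 'M[R]_m) i j :
  (P *m redlap R *m Q) i j =
  \sum_(d : E * bool) (dtail ends d != v2)%:R * P i (qrank (dtail ends d)) *
     ((dtail ends d != v2)%:R * Q (qrank (dtail ends d)) j -
      (dhead ends d != v2)%:R * Q (qrank (dhead ends d)) j).
Proof.
have PL l : (P *m redlap R) i l = \sum_(d : E * bool)
    (dtail ends d != v2)%:R * P i (qrank (dtail ends d)) *
    ((qrank (dtail ends d) == l)%:R - (dhead ends d == qval l)%:R).
  rewrite mxE; under eq_bigr => k _ do rewrite mxE mulr_sumr.
  rewrite exchange_big; apply: eq_bigr => d _.
  under eq_bigr => k _ do rewrite mulrCA.
  by rewrite (sum_qrank) mulrA.
rewrite mxE; under eq_bigr => l _ do rewrite PL mulr_suml.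
rewrite exchange_big; apply: eq_bigr => d _.
under eq_bigr => l _ do rewrite -mulrA mulrBl.
rewrite -mulr_sumr sumrB (sum_qrank).
under eq_bigr => l _ do rewrite eq_sym.
rewrite sum_natr_eq; case: (dtail ends d != v2); rewrite ?mul1r ?mul0r //.
Qed.

End MatrixTree.

Lemma xF_neq0 : xF != 0.
Proof. by rewrite /xF tofrac_eq0 polyX_eq0. Qed.

Section Laplacian.
Variables (V E : finType) (ends : E -> V * V) (v1 v2 : V) (hv : v1 != v2).
Local Notation m := #|{: qvert v2}|.
Local Notation qval := (@qval V v2).
Local Notation qrank := (qrank hv).
Local Notation tl := (dtail ends).
Local Notation hd := (dhead ends).

(* The vertex [u] of [H_0] lies over the quotient vertex [i] such that
   [qind u i = 1], at height [xlevel u] ([x^-1] for [v2], [1] otherwise). *)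
Definition qind u (i : 'I_m) : Fx := ((join_vtx v1 v2 0 u).1 == qval i)%:R.
Definition xlevel u : Fx := xF ^ (join_vtx v1 v2 0 u).2.

Lemma xlevel_neq0 u : xlevel u != 0.
Proof. by rewrite expfz_eq0 negb_and xF_neq0 orbT. Qed.

Lemma qind_mul u i j : qind u i * qind u j = (i == j)%:R * qind u i.
Proof.
rewrite /qind; have [<-|ij] := eqVneq i j; first by case: (_ == _); rewrite ?mulr1 ?mulr0.
case: eqP => [ui|]; rewrite ?mul0r ?mulr0 //.
case: eqP => [uj|]; rewrite ?mulr0 //.
by case/eqP: ij; apply: qval_inj; rewrite -ui -uj.
Qed.

Lemma lapL_darts i j : lapL ends v1 v2 i j =
  \sum_(d : E * bool) qind (tl d) i / xlevel (tl d) *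
     (xlevel (tl d) * qind (tl d) j - xlevel (hd d) * qind (hd d) j).
Proof.
rewrite mxE /lapD /lapA -(pair_bigA _ (fun e b => qind (tl (e, b)) i / xlevel (tl (e, b)) *
     (xlevel (tl (e, b)) * qind (tl (e, b)) j - xlevel (hd (e, b)) * qind (hd (e, b)) j))).
have -> n : (if i == j then n%:R else 0) = (i == j)%:R * n%:R :> Fx.
  by case: (i == j); rewrite ?mul1r ?mul0r.
rewrite natr_sum mulr_sumr -sumrB; apply: eq_bigr => e _.
rewrite natr_sum mulr_sumr -sumrB; apply: eq_bigr => b _ /=.
have -> : xF ^ ((join_vtx v1 v2 0 (dart ends e b).2).2 - (join_vtx v1 v2 0 (dart ends e b).1).2)
          = xlevel (hd (e, b)) / xlevel (tl (e, b)).
  by rewrite expfzDr ?xF_neq0 // -invr_expz.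
move: (qind_mul (tl (e, b)) i j) (xlevel_neq0 (tl (e, b))).
rewrite /qind /qval /dtail /dhead /=.
move: (xlevel _) (xlevel _) => wh wt.
move: (_.1 == sval (enum_val i)) (_.1 == sval (enum_val j)) (_.1 == sval (enum_val j)).
case=> [] hj tj tij wt0; rewrite ?andFb ?andTb; last by rewrite mulr0 !mul0r subrr.
rewrite mulr1 mul1r in tij; rewrite mulr1 -tij.
rewrite mulr1n div1r mulrBr mulrA mulVf // mul1r.
by case: hj; rewrite ?mulr1 ?mulr0 ?subr0 // [wt^-1 * _]mulrC.
Qed.

(* With [a u := qind u / xlevel u] and [b u := xlevel u * qind u], [L(x)] is
   the sum over darts of [a (tail) * (b (tail) - b (head))^T] (lapL_darts);
   column [qrank u] of [glueL] is [a u - a v2], row [qrank u] of [glueR] is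
   [b u - b v2]. *)
Definition glueL : 'M[Fx]_m := \matrix_(i, j) ((i == j)%:R - xF * (i == qrank v1)%:R).
Definition glueR : 'M[Fx]_m := \matrix_(i, j) ((i == j)%:R - xF^-1 * (j == qrank v1)%:R).

Lemma det_glueL : \det glueL = 1 - xF.
Proof. exact: det_1_sub_row. Qed.

Lemma det_glueR : \det glueR = 1 - xF^-1.
Proof.
rewrite -det_tr -(det_1_sub_row (qrank v1)); congr (\det _).
by apply/matrixP => i j; rewrite !mxE eq_sym.
Qed.

Lemma glueL_col u i :
  (u != v2)%:R * glueL i (qrank u) = qind u i / xlevel u - xF * (i == qrank v1)%:R.
Proof.
rewrite /qind /xlevel /join_vtx mxE; have [->|uv2] := eqVneq u v2.
  by rewrite /= mul0r (eq_qval hv) // (_ : 0 - 1 = -1 :> int) // exprN1 invrK mulrC subrr.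
by rewrite /= mul1r expr0z divr1 (eq_qval hv).
Qed.

Lemma glueR_row u j :
  (u != v2)%:R * glueR (qrank u) j = xlevel u * qind u j - xF^-1 * (j == qrank v1)%:R.
Proof.
rewrite /qind /xlevel /join_vtx mxE; have [->|uv2] := eqVneq u v2.
  by rewrite /= mul0r (eq_qval hv) // (_ : 0 - 1 = -1 :> int) // exprN1 subrr.
by rewrite /= mul1r expr0z mul1r (eq_qval hv) // eq_sym.
Qed.

Lemma lapL_factor : lapL ends v1 v2 = glueL *m redlap ends v2 Fx *m glueR.
Proof.
apply/matrixP => i j; rewrite (mul_redlap ends hv) lapL_darts; symmetry.
under eq_bigr do rewrite glueL_col !glueR_row opprB addrA subrK mulrBl.
(* The [a v2] terms cancel between the two darts of each edge. *)
rewrite sumrB -mulr_sumr (sum_darts_antisym ends (fun u => xlevel u * qind u j)).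
by rewrite mulr0 subr0.
Qed.

End Laplacian.

Lemma mul_1subr_1subVr (F : fieldType) (x : F) :
  x != 0 -> (1 - x) * (1 - x^-1) = - x^-1 * (x - 1) ^+ 2.
Proof. by move=> x0; field. Qed.

Theorem mainTheorem6 (V E : finType) (ends : E -> V * V) (v1 v2 : V)
    (hv : v1 != v2) :
  exists (c : rat) (k : int), c != 0 /\
    Delta0 ends v1 v2 =
      tofrac (c%:P : {poly rat}) * xF ^ k * (tau ends)%:R * (xF - 1) ^+ 2.
Proof.
exists (-1), (-1); split; first by rewrite oppr_eq0 oner_eq0.
rewrite /Delta0 (lapL_factor ends hv) !det_mulmx det_glueL (det_redlap ends hv) det_glueR.
rewrite polyCN polyC1 rmorphN1 exprN1 mulrAC (mul_1subr_1subVr xF_neq0).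
by rewrite [RHS]mulrAC mulN1r.
Qed.
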